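(* For every integer $a\geq 1$, $$\sigma(2,2a-1)=2a(2a-1)\lambda(2a+1)-8\sum_{j=1}^{a-1}j\,\lambda(2a-2j)\lambda(2j+1),$$ where an empty sum equals $0$.
   Context: For integers $t\geq 1$ and $n\geq 1$ let $S_n^{(t)}=\sum_{k=1}^{n}\frac{1}{(2k-1)^t}$, and for integers $s\geq 2$, $t\geq 1$ let $\sigma(s,t)=\sum_{n\geq 1}\frac{S_n^{(t)}}{n^s}$. For real $s>1$, $\lambda(s)=\sum_{n\geq 1}\frac{1}{(2n-1)^s}=(1-2^{-s})\zeta(s)$. *)

From Stdlib Require Import Reals.
From Coquelicot Require Import Coquelicot.
Open Scope R_scope.

Definition S_odd (t n : nat) : R :=
  sum_n_m (fun k => / (2 * INR k - 1) ^ t) 1 n.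

Definition sigma_odd (s t : nat) : R :=
  Series (fun m => S_odd t (S m) / (INR (S m)) ^ s).

(* lambda_odd(s) = sum_{n>=1} 1/(2n-1)^s, for integer s >= 2 *)
Definition lambda_odd (s : nat) : R :=
  Series (fun m => / (2 * INR (S m) - 1) ^ s).

Arguments S_odd (t n)%_nat_scope.
Arguments sigma_odd (s t)%_nat_scope.
Arguments lambda_odd s%_nat_scope.

(* With o_n = 2n+1, write S_{m+1}/(m+1)^2 = sum_{k<=m} 4/(o_k^p (o_k+o_j)^2) where m = k+j,
   so that, everything being nonnegative, sigma(2,p) = 4 sum_n o_n^(-p) sum_k (o_n+o_k)^(-2).
   Symmetrizing in (n,k) gives 2 sum_m sum_n (o_n^(-p) + o_m^(-p))/(o_n+o_m)^2, and adding the
   antisymmetric kernel q(m,n) - q(n,m), with q(i,j) = (o_i^(-p) - o_j^(-p))/(o_j-o_i)^2 for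
   i < j, changes nothing because q is absolutely summable.  For p = 2b+1 the combined kernel
   splits by partial fractions into products o_m^(-(2j+1)) o_n^(-(2b+2-2j)) and a multiple of
   1/(o_n^2 - o_m^2), whose sum over n <> m telescopes to 1/(4 o_m^2); summing over n and then
   over m yields the products lambda(2a-2j) lambda(2j+1). *)

From Stdlib Require Import Reals Arith Lra Lia.
From Coquelicot Require Import Coquelicot.
Open Scope R_scope.

(* Coquelicot states equations between sums in [AbelianMonoid.sort _], and its [mult] lemmas
   return sums over [Ring.AbelianMonoid R_Ring]; [ring], [field] and [lra] only recognize them
   once retyped in [R] and folded back to [R_AbelianMonoid]. *)
Ltac as_R_eq := match goal with |- ?x = ?y => change (@eq R x y) end.

Lemma sum_n_Sn_R (a : nat -> R) n : sum_n a (S n) = sum_n a n + a (S n).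
Proof. exact (sum_Sn a n). Qed.

Lemma ex_series_scal_l_R (c : R) (a : nat -> R) :
  ex_series a -> ex_series (fun n => c * a n).
Proof. exact (ex_series_scal c a). Qed.

Lemma ex_series_plus_R (a b : nat -> R) :
  ex_series a -> ex_series b -> ex_series (fun n => a n + b n).
Proof. exact (ex_series_plus a b). Qed.

Lemma ex_series_minus_R (a b : nat -> R) :
  ex_series a -> ex_series b -> ex_series (fun n => a n - b n).
Proof. exact (ex_series_minus a b). Qed.

Lemma ex_series_le_nonneg (a b : nat -> R) :
  (forall n, 0 <= a n <= b n) -> ex_series b -> ex_series a.
Proof.
  intros Hab. apply (@ex_series_le R_AbsRing R_CompleteNormedModule).
  intros n. change (norm (a n)) with (Rabs (a n)). rewrite Rabs_pos_eq; apply Hab.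
Qed.

(** * Series with nonnegative terms *)

Section NonnegSeries.

Variable a : nat -> R.
Hypothesis a_ge0 : forall n, 0 <= a n.

Lemma sum_n_ge0 N : 0 <= sum_n a N.
Proof.
  induction N as [|N IH]; [rewrite sum_O; apply a_ge0|].
  rewrite sum_n_Sn_R. specialize (a_ge0 (S N)). lra.
Qed.

Lemma sum_n_le_succ N : sum_n a N <= sum_n a (S N).
Proof. rewrite sum_n_Sn_R. specialize (a_ge0 (S N)). lra. Qed.

Lemma ex_lim_seq_sum_n_ge0 : exists l, is_lim_seq (sum_n a) l /\ Rbar_le 0 l.
Proof.
  destruct (ex_lim_seq_incr _ sum_n_le_succ) as [l Hl].
  exists l. split; [exact Hl|].
  exact (is_lim_seq_le _ _ 0 l sum_n_ge0 (is_lim_seq_const 0) Hl).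
Qed.

Lemma Series_ge0 : 0 <= Series a.
Proof.
  destruct ex_lim_seq_sum_n_ge0 as [l [Hl H0]].
  unfold Series. rewrite (is_lim_seq_unique _ _ Hl).
  destruct l; simpl in *; lra.
Qed.

Lemma ex_series_bounded_nonneg M :
  (forall N, sum_n a N <= M) -> ex_series a /\ Series a <= M.
Proof.
  intros HM. destruct ex_lim_seq_sum_n_ge0 as [l [Hl H0]].
  assert (HlM := is_lim_seq_le _ _ l M HM Hl (is_lim_seq_const M)).
  destruct l as [l| |]; simpl in H0, HlM; try contradiction.
  split; [exists l; exact Hl|].
  unfold Series. rewrite (is_lim_seq_unique _ _ Hl). exact HlM.
Qed.

End NonnegSeries.

Lemma sum_n_le_Series (a : nat -> R) :
  (forall n, 0 <= a n) -> ex_series a -> forall N, sum_n a N <= Series a.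
Proof.
  intros a_ge0 Ha N.
  rewrite (Series_incr_n a (S N)) by (lia || exact Ha).
  rewrite <- sum_n_Reals; simpl pred.
  assert (0 <= Series (fun k => a (S N + k)%nat)) by (apply Series_ge0; intros; apply a_ge0).
  lra.
Qed.

Lemma term_le_Series (a : nat -> R) :
  (forall n, 0 <= a n) -> ex_series a -> forall N, a N <= Series a.
Proof.
  intros a_ge0 Ha N. eapply Rle_trans; [|exact (sum_n_le_Series a a_ge0 Ha N)].
  destruct N as [|N]; [rewrite sum_O; lra|].
  rewrite sum_n_Sn_R. assert (H := sum_n_ge0 a a_ge0 N). lra.
Qed.

Lemma is_series_R_is_lim_seq (a : nat -> R) l :
  is_series a l <-> is_lim_seq (sum_n a) l.
Proof. split; intros H; exact H. Qed.

Lemma is_series_ext_eq (a b : nat -> R) la lb :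
  (forall n, a n = b n) -> la = lb -> is_series a la -> is_series b lb.
Proof. intros Hab <-. apply is_series_ext, Hab. Qed.

Lemma is_series_finite_support (b : nat -> R) N :
  (forall n, (N < n)%nat -> b n = 0) -> is_series b (sum_n b N).
Proof.
  intros Hb. apply is_series_R_is_lim_seq, (is_lim_seq_incr_n _ N).
  apply is_lim_seq_ext with (fun _ => sum_n b N); [|apply is_lim_seq_const].
  intros n; induction n as [|n IH]; [reflexivity|].
  replace (S n + N)%nat with (S (n + N)) by lia.
  rewrite sum_n_Sn_R, Hb, Rplus_0_r by lia. exact IH.
Qed.

Lemma is_series_0 : is_series (fun _ : nat => 0) 0.
Proof.
  assert (H := is_series_finite_support (fun _ : nat => 0) 0 (fun _ _ => eq_refl)).
  rewrite sum_O in H. exact H.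
Qed.

Definition point_seq (m : nat) (c : R) (n : nat) : R :=
  if Nat.eq_dec n m then c else 0.

Lemma is_series_point_seq m c : is_series (point_seq m c) c.
Proof.
  assert (Hbefore : forall N, (N < m)%nat -> sum_n (point_seq m c) N = 0).
  { induction N as [|N IH]; intros HN.
    - rewrite sum_O; unfold point_seq; destruct Nat.eq_dec; [lia|reflexivity].
    - rewrite sum_n_Sn_R, IH by lia. unfold point_seq; destruct Nat.eq_dec; [lia|apply Rplus_0_r]. }
  replace c with (sum_n (point_seq m c) m) at 2.
  - apply is_series_finite_support.
    intros n Hn; unfold point_seq; destruct Nat.eq_dec; [lia|reflexivity].
  - destruct m as [|m].
    + rewrite sum_O. unfold point_seq; destruct Nat.eq_dec; [reflexivity|lia].
    + rewrite sum_n_Sn_R, Hbefore by lia. unfold point_seq; destruct Nat.eq_dec; [apply Rplus_0_l|lia].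
Qed.

Definition shift_seq (k : nat) (g : nat -> R) (n : nat) : R :=
  if le_dec k n then g (n - k)%nat else 0.

Lemma shift_seq_add k g n : shift_seq k g (k + n) = g n.
Proof. unfold shift_seq; destruct le_dec; [f_equal|]; lia. Qed.

Lemma ex_series_shift_seq k g : ex_series g -> ex_series (shift_seq k g).
Proof.
  intros Hg. apply (ex_series_incr_n _ k).
  eapply ex_series_ext; [|exact Hg]. intros n; symmetry; apply shift_seq_add.
Qed.

Lemma Series_shift_seq k g : Series (shift_seq k g) = Series g.
Proof.
  rewrite (Series_incr_n_aux _ k).
  - apply Series_ext, shift_seq_add.
  - intros j Hj; unfold shift_seq; destruct le_dec; [lia|reflexivity].
Qed.

Lemma shift_seq_ge0 k g : (forall n, 0 <= g n) -> forall n, 0 <= shift_seq k g n.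
Proof. intros Hg n; unfold shift_seq; destruct le_dec; [apply Hg|lra]. Qed.

Lemma is_series_telescope (b : nat -> R) :
  is_lim_seq b 0 -> is_series (fun n => b n - b (S n)) (b 0%nat).
Proof.
  intros Hb. apply is_series_R_is_lim_seq.
  apply is_lim_seq_ext with (fun N => b 0%nat - b (S N)).
  - intros N; induction N as [|N IH]; [rewrite sum_O; reflexivity|].
    rewrite sum_n_Sn_R, <- IH. ring.
  - replace (Finite (b 0%nat)) with (Rbar_minus (b 0%nat) 0) by (simpl; f_equal; ring).
    apply is_lim_seq_minus'; [apply is_lim_seq_const|].
    exact (proj1 (is_lim_seq_incr_1 b 0) Hb).
Qed.

Lemma is_series_telescope_gap (b : nat -> R) L :
  is_lim_seq b 0 -> is_series (fun n => b n - b (n + S L)%nat) (sum_n b L).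
Proof.
  intros Hb. induction L as [|L IH].
  - rewrite sum_O. eapply is_series_ext; [|exact (is_series_telescope b Hb)].
    intros n. rewrite Nat.add_1_r. reflexivity.
  - assert (Hc : is_lim_seq (fun n => b (n + S L)%nat) 0)
      by exact (proj1 (is_lim_seq_incr_n b (S L) 0) Hb).
    rewrite sum_n_Sn_R.
    eapply is_series_ext; [|exact (is_series_plus _ _ _ _ IH (is_series_telescope _ Hc))].
    intros n. simpl. replace (n + S (S L))%nat with (S n + S L)%nat by lia.
    change (b n - b (n + S L)%nat + (b (n + S L)%nat - b (S n + S L)%nat)
            = b n - b (S n + S L)%nat). ring.
Qed.

(** * Exchanging summations *)

Lemma is_series_sum_n_m (g : nat -> nat -> R) lo hi :
  (forall k, (lo <= k <= hi)%nat -> ex_series (g k)) ->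
  is_series (fun i => sum_n_m (fun k => g k i) lo hi) (sum_n_m (fun k => Series (g k)) lo hi).
Proof.
  intros Hg. destruct (le_lt_dec lo hi) as [Hle|Hlt].
  - replace hi with (lo + (hi - lo))%nat in * by lia.
    generalize (hi - lo)%nat Hg. clear. intros d.
    induction d as [|d IH]; intros Hg.
    + rewrite Nat.add_0_r in *. rewrite sum_n_n.
      apply (is_series_ext (g lo)); [intros i; rewrite sum_n_n; reflexivity|].
      apply Series_correct, Hg. lia.
    + rewrite Nat.add_succ_r in *. rewrite sum_n_Sm by lia.
      apply (is_series_ext (fun i => sum_n_m (fun k => g k i) lo (lo + d) + g (S (lo + d)) i)).
      { intros i; rewrite sum_n_Sm by lia; reflexivity. }
      apply (@is_series_plus R_AbsRing R_NormedModule); [apply IH; intros k Hk; apply Hg; lia|].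
      apply Series_correct, Hg. lia.
  - rewrite sum_n_m_zero by lia.
    eapply is_series_ext; [|exact is_series_0].
    intros i. rewrite sum_n_m_zero by lia. reflexivity.
Qed.

Section DoubleSeriesNonneg.

Variable a : nat -> nat -> R.
Hypothesis a_ge0 : forall i j, 0 <= a i j.
Hypothesis ex_rows : forall i, ex_series (a i).
Hypothesis ex_row_sums : ex_series (fun i => Series (a i)).

Lemma ex_series_columns j : ex_series (fun i => a i j).
Proof.
  apply (ex_series_bounded_nonneg _ (fun i => a_ge0 i j) (Series (fun i => Series (a i)))).
  intros N. eapply Rle_trans.
  2: { apply sum_n_le_Series; [intros i; apply Series_ge0, a_ge0|exact ex_row_sums]. }
  apply sum_n_m_le. intros k. apply term_le_Series; auto.
Qed.

Lemma column_sums_le :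
  ex_series (fun j => Series (fun i => a i j)) /\
  Series (fun j => Series (fun i => a i j)) <= Series (fun i => Series (a i)).
Proof.
  apply ex_series_bounded_nonneg; [intros j; apply Series_ge0; auto|].
  intros N. unfold sum_n.
  rewrite <- (is_series_unique _ _
                (is_series_sum_n_m (fun j i => a i j) 0 N (fun j _ => ex_series_columns j))).
  apply Series_le; auto.
  intros i; split; [apply sum_n_ge0; auto|apply sum_n_le_Series; auto].
Qed.

End DoubleSeriesNonneg.

Lemma is_series_swap_nonneg (a : nat -> nat -> R) :
  (forall i j, 0 <= a i j) -> (forall i, ex_series (a i)) ->
  ex_series (fun i => Series (a i)) ->
  (forall j, ex_series (fun i => a i j)) /\
  is_series (fun j => Series (fun i => a i j)) (Series (fun i => Series (a i))).
Proof.
  intros a_ge0 ex_rows ex_row_sums.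
  assert (ex_cols := ex_series_columns a a_ge0 ex_rows ex_row_sums).
  destruct (column_sums_le a a_ge0 ex_rows ex_row_sums) as [ex_col_sums Hle].
  destruct (column_sums_le (fun j i => a i j) (fun j i => a_ge0 i j) ex_cols ex_col_sums)
    as [_ Hge].
  split; [exact ex_cols|].
  replace (Series (fun i => Series (a i))) with (Series (fun j => Series (fun i => a i j)))
    by (apply Rle_antisym; assumption).
  apply Series_correct, ex_col_sums.
Qed.

Lemma is_series_triangle_nonneg (c : nat -> nat -> R) :
  (forall k m, 0 <= c k m) ->
  (forall k, ex_series (fun j => c k (k + j)%nat)) ->
  ex_series (fun k => Series (fun j => c k (k + j)%nat)) ->
  is_series (fun m => sum_n (fun k => c k m) m) (Series (fun k => Series (fun j => c k (k + j)%nat))).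
Proof.
  intros c_ge0 ex_rows ex_row_sums.
  set (a := fun k => shift_seq k (fun j => c k (k + j)%nat)).
  assert (Hrow : forall k, Series (a k) = Series (fun j => c k (k + j)%nat))
    by (intros k; apply Series_shift_seq).
  destruct (is_series_swap_nonneg a) as [_ Hswap].
  - intros k m; apply shift_seq_ge0; auto.
  - intros k; apply ex_series_shift_seq; auto.
  - eapply ex_series_ext; [|exact ex_row_sums]. intros k; symmetry; apply Hrow.
  - rewrite (Series_ext _ _ Hrow) in Hswap.
    eapply is_series_ext; [|exact Hswap]. intros m.
    apply is_series_unique.
    replace (sum_n (fun k => c k m) m) with (sum_n (fun k => a k m) m).
    + apply is_series_finite_support.
      intros n Hn. unfold a, shift_seq. destruct le_dec; [lia|reflexivity].
    + apply sum_n_ext_loc. intros k Hk. unfold a, shift_seq.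
      destruct le_dec; [f_equal; lia|lia].
Qed.

Lemma is_series_symmetrize_nonneg (a : nat -> nat -> R) :
  (forall i j, 0 <= a i j) -> (forall i, ex_series (a i)) ->
  ex_series (fun i => Series (a i)) ->
  (forall m, ex_series (fun n => a n m + a m n)) /\
  is_series (fun m => Series (fun n => a n m + a m n)) (2 * Series (fun n => Series (a n))).
Proof.
  intros a_ge0 ex_rows ex_row_sums.
  destruct (is_series_swap_nonneg a a_ge0 ex_rows ex_row_sums) as [ex_cols Hcols].
  assert (Hm : forall m, Series (fun n => a n m + a m n) = Series (fun n => a n m) + Series (a m))
    by (intros m; apply Series_plus; auto).
  split; [intros m; apply ex_series_plus_R; auto|].
  eapply is_series_ext; [intros m; symmetry; apply Hm|].
  replace (2 * Series (fun n => Series (a n)))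
    with (Series (fun n => Series (a n)) + Series (fun n => Series (a n))) by ring.
  apply (@is_series_plus R_AbsRing R_NormedModule); [exact Hcols|apply Series_correct, ex_row_sums].
Qed.

Lemma is_series_antisymmetrize_nonneg (q : nat -> nat -> R) :
  (forall i j, 0 <= q i j) -> (forall i, ex_series (q i)) ->
  ex_series (fun i => Series (q i)) ->
  (forall m, ex_series (fun n => q m n - q n m)) /\
  is_series (fun m => Series (fun n => q m n - q n m)) 0.
Proof.
  intros q_ge0 ex_rows ex_row_sums.
  destruct (is_series_swap_nonneg q q_ge0 ex_rows ex_row_sums) as [ex_cols Hcols].
  assert (Hm : forall m, Series (fun n => q m n - q n m) = Series (q m) - Series (fun n => q n m))
    by (intros m; apply Series_minus; auto).
  split; [intros m; apply ex_series_minus_R; auto|].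
  eapply is_series_ext; [intros m; symmetry; apply Hm|].
  replace 0 with (Series (fun n => Series (q n)) - Series (fun n => Series (q n))) by ring.
  apply (@is_series_minus R_AbsRing R_NormedModule); [apply Series_correct, ex_row_sums|exact Hcols].
Qed.

Lemma is_lim_seq_inv_affine c d :
  0 < c -> 0 < d -> is_lim_seq (fun k => / (c + d * INR k)) 0.
Proof.
  intros Hc Hd.
  replace (Finite 0) with (Rbar_inv p_infty) by reflexivity.
  apply is_lim_seq_inv; [|discriminate].
  apply is_lim_seq_le_p_loc with (fun k => INR k * d).
  - exists 0%nat. intros n _. assert (0 <= INR n) by apply pos_INR. nra.
  - apply (is_lim_seq_mult _ _ p_infty d); [apply is_lim_seq_INR|apply is_lim_seq_const|].
    apply is_Rbar_mult_p_infty_pos. exact Hd.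
Qed.

(* Comparison with the telescoping series of [1/2 (1/(x-1+2k) - 1/(x+1+2k))],
   whose terms are [1/((x+2k)^2 - 1)]. *)
Lemma inv_sq_arith_series x : 1 < x ->
  ex_series (fun k => / (x + 2 * INR k) ^ 2) /\
  Series (fun k => / (x + 2 * INR k) ^ 2) <= / (2 * (x - 1)).
Proof.
  intros Hx.
  set (b := fun k => / 2 * / (x - 1 + 2 * INR k)).
  assert (Htel : is_series (fun k => b k - b (S k)) (b 0%nat)).
  { apply is_series_telescope. unfold b.
    replace (Finite 0) with (Rbar_mult (/ 2) 0) by (simpl; f_equal; ring).
    apply is_lim_seq_scal_l, is_lim_seq_inv_affine; lra. }
  assert (Hcmp : forall k, 0 <= / (x + 2 * INR k) ^ 2 <= b k - b (S k)).
  { intros k. unfold b. rewrite S_INR.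
    assert (0 <= INR k) by apply pos_INR.
    split; [apply Rlt_le, Rinv_0_lt_compat, pow_lt; lra|].
    replace (/ 2 * / (x - 1 + 2 * INR k) - / 2 * / (x - 1 + 2 * (INR k + 1)))
      with (/ ((x + 2 * INR k) ^ 2 - 1)) by (field; repeat split; nra).
    apply Rinv_le_contravar; nra. }
  assert (Hex : ex_series (fun k => b k - b (S k))) by (eexists; exact Htel).
  split; [exact (ex_series_le_nonneg _ _ Hcmp Hex)|].
  eapply Rle_trans; [exact (Series_le _ _ Hcmp Hex)|].
  rewrite (is_series_unique _ _ Htel). unfold b. simpl.
  right. field. lra.
Qed.

Definition oddR (n : nat) : R := 2 * INR n + 1.

Lemma oddR_ge1 n : 1 <= oddR n.
Proof. unfold oddR. assert (0 <= INR n) by apply pos_INR. lra. Qed.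

Lemma oddR_pos n : 0 < oddR n.
Proof. assert (H := oddR_ge1 n). lra. Qed.

Lemma oddR_add k j : 2 * INR (k + j) + 2 = oddR k + oddR j.
Proof. unfold oddR. rewrite plus_INR. ring. Qed.

Lemma inv_oddR_pow_pos n s : 0 < / oddR n ^ s.
Proof. apply Rinv_0_lt_compat, pow_lt, oddR_pos. Qed.

Lemma inv_oddR_pow_le n s t : (t <= s)%nat -> / oddR n ^ s <= / oddR n ^ t.
Proof.
  intros Hts. apply Rinv_le_contravar; [apply pow_lt, oddR_pos|].
  apply Rle_pow; [apply oddR_ge1|exact Hts].
Qed.

Lemma lambda_odd_Series s : lambda_odd s = Series (fun n => / oddR n ^ s).
Proof. apply Series_ext. intros n. unfold oddR. rewrite S_INR. f_equal. f_equal. ring. Qed.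

Lemma ex_series_inv_oddR_pow s : (2 <= s)%nat -> ex_series (fun n => / oddR n ^ s).
Proof.
  intros Hs.
  apply (ex_series_le_nonneg _ (fun n => 4 * / (2 + 2 * INR n) ^ 2)).
  - intros n. split; [apply Rlt_le, inv_oddR_pow_pos|].
    eapply Rle_trans; [apply inv_oddR_pow_le, Hs|].
    assert (0 <= INR n) by apply pos_INR. unfold oddR.
    replace (4 * / (2 + 2 * INR n) ^ 2) with (/ (1 + INR n) ^ 2) by (field; lra).
    apply Rinv_le_contravar; [apply pow_lt; lra|nra].
  - apply ex_series_scal_l_R, inv_sq_arith_series. lra.
Qed.

Definition cross_sum (n : nat) : R := Series (fun k => / (oddR n + oddR k) ^ 2).

Lemma cross_sum_spec n :
  ex_series (fun k => / (oddR n + oddR k) ^ 2) /\ cross_sum n <= / (2 * oddR n).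
Proof.
  assert (Heq : forall k, / (oddR n + oddR k) ^ 2 = / (2 * INR n + 2 + 2 * INR k) ^ 2)
    by (intros k; unfold oddR; f_equal; f_equal; ring).
  destruct (inv_sq_arith_series (2 * INR n + 2)) as [Hex Hle].
  { assert (0 <= INR n) by apply pos_INR. lra. }
  split; [eapply ex_series_ext; [intros k; symmetry; apply Heq|exact Hex]|].
  unfold cross_sum. rewrite (Series_ext _ _ Heq).
  replace (2 * oddR n) with (2 * (2 * INR n + 2 - 1)) by (unfold oddR; ring).
  exact Hle.
Qed.

Lemma cross_sum_ge0 n : 0 <= cross_sum n.
Proof.
  apply Series_ge0. intros k. apply Rlt_le, Rinv_0_lt_compat, pow_lt.
  assert (H1 := oddR_pos n). assert (H2 := oddR_pos k). lra.
Qed.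

Lemma ex_series_weighted_cross_sum p :
  (1 <= p)%nat -> ex_series (fun n => / oddR n ^ p * cross_sum n).
Proof.
  intros Hp. apply (ex_series_le_nonneg _ (fun n => / oddR n ^ 2)).
  2: apply ex_series_inv_oddR_pow; lia.
  intros n. split; [apply Rmult_le_pos; [apply Rlt_le, inv_oddR_pow_pos|apply cross_sum_ge0]|].
  assert (H1 := inv_oddR_pow_le n p 1 Hp). rewrite pow_1 in H1.
  assert (H2 := proj2 (cross_sum_spec n)).
  assert (H3 := oddR_ge1 n). assert (H4 := cross_sum_ge0 n).
  assert (H5 : / (2 * oddR n) <= / oddR n) by (apply Rinv_le_contravar; lra).
  replace (/ oddR n ^ 2) with (/ oddR n * / oddR n) by (field; lra).
  apply Rmult_le_compat; try lra. apply Rlt_le, inv_oddR_pow_pos.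
Qed.

Lemma sigma_odd_cross_sum p : (1 <= p)%nat ->
  sigma_odd 2 p = 4 * Series (fun n => / oddR n ^ p * cross_sum n).
Proof.
  intros Hp.
  set (c := fun k m => 4 * (/ oddR k ^ p * / (2 * INR m + 2) ^ 2)).
  assert (Hterm : forall m, S_odd p (S m) / INR (S m) ^ 2 = sum_n (fun k => c k m) m).
  { intros m. unfold c, sum_n.
    rewrite (sum_n_m_mult_l 4), (sum_n_m_mult_r (/ (2 * INR m + 2) ^ 2)).
    unfold S_odd. rewrite <- sum_n_m_S.
    rewrite (sum_n_m_ext _ (fun k => / oddR k ^ p))
      by (intros k; rewrite S_INR; unfold oddR; f_equal; f_equal; ring).
    rewrite S_INR. change mult with Rmult. as_R_eq.
    change (@sum_n_m (Ring.AbelianMonoid R_Ring)) with (@sum_n_m R_AbelianMonoid).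
    assert (0 <= INR m) by apply pos_INR. field. lra. }
  assert (Hrow : forall k, Series (fun j => c k (k + j)%nat) = 4 * (/ oddR k ^ p * cross_sum k)).
  { intros k. unfold c. rewrite Series_scal_l, Series_scal_l. unfold cross_sum.
    do 2 f_equal. apply Series_ext. intros j. rewrite oddR_add. reflexivity. }
  unfold sigma_odd. rewrite (Series_ext _ _ Hterm).
  apply is_series_unique.
  rewrite <- Series_scal_l, <- (Series_ext _ _ Hrow).
  apply is_series_triangle_nonneg.
  - intros k m. unfold c. assert (0 <= INR m) by apply pos_INR.
    apply Rmult_le_pos; [lra|]. apply Rmult_le_pos; [apply Rlt_le, inv_oddR_pow_pos|].
    apply Rlt_le, Rinv_0_lt_compat, pow_lt. lra.
  - intros k. unfold c. apply ex_series_scal_l_R, ex_series_scal_l_R.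
    eapply ex_series_ext; [|exact (proj1 (cross_sum_spec k))].
    intros j. rewrite oddR_add. reflexivity.
  - eapply ex_series_ext; [intros k; symmetry; apply Hrow|].
    apply ex_series_scal_l_R, ex_series_weighted_cross_sum, Hp.
Qed.

(** * The symmetric and antisymmetric kernels *)

Definition sym_kernel (p m n : nat) : R :=
  (/ oddR n ^ p + / oddR m ^ p) / (oddR n + oddR m) ^ 2.

Lemma sym_kernel_rows_sum p : (1 <= p)%nat ->
  (forall m, ex_series (sym_kernel p m)) /\
  is_series (fun m => Series (sym_kernel p m))
    (2 * Series (fun n => / oddR n ^ p * cross_sum n)).
Proof.
  intros Hp.
  set (a := fun n m => / oddR n ^ p * / (oddR n + oddR m) ^ 2).
  assert (Hsplit : forall m n, sym_kernel p m n = a n m + a m n).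
  { intros m n. unfold sym_kernel, a. rewrite (Rplus_comm (oddR m) (oddR n)). unfold Rdiv. ring. }
  assert (Hrow : forall n, Series (a n) = / oddR n ^ p * cross_sum n)
    by (intros n; apply Series_scal_l).
  destruct (is_series_symmetrize_nonneg a) as [Hex Hsum].
  - intros n m. apply Rmult_le_pos; [apply Rlt_le, inv_oddR_pow_pos|].
    apply Rlt_le, Rinv_0_lt_compat, pow_lt.
    assert (H1 := oddR_pos n). assert (H2 := oddR_pos m). lra.
  - intros n. apply ex_series_scal_l_R, cross_sum_spec.
  - eapply ex_series_ext; [intros n; symmetry; apply Hrow|].
    apply ex_series_weighted_cross_sum, Hp.
  - rewrite (Series_ext _ _ Hrow) in Hsum.
    split; [intros m; eapply ex_series_ext; [intros n; symmetry; apply Hsplit|apply Hex]|].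
    eapply is_series_ext; [|exact Hsum].
    intros m. apply Series_ext. intros n. symmetry. apply Hsplit.
Qed.

Lemma pow_sub_le_lipschitz (x y : R) (p : nat) :
  0 <= y <= x -> x <= 1 -> x ^ p - y ^ p <= INR p * (x - y).
Proof.
  intros Hxy Hx1. induction p as [|p IH]; [simpl; lra|].
  rewrite S_INR. simpl.
  assert (H1 : y ^ p <= x ^ p) by (apply pow_incr; lra).
  assert (H2 : y ^ p <= 1) by (rewrite <- (pow1 p); apply pow_incr; lra).
  assert (H3 : 0 <= (1 - x) * (x ^ p - y ^ p)) by (apply Rmult_le_pos; lra).
  assert (H4 : 0 <= (1 - y ^ p) * (x - y)) by (apply Rmult_le_pos; lra).
  nra.
Qed.

Definition gap_kernel (p i j : nat) : R :=
  if lt_dec i j then (/ oddR i ^ p - / oddR j ^ p) / (oddR j - oddR i) ^ 2 else 0.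

Definition gap_tail (i d : nat) : R := / (oddR i + 2 + 2 * INR d) ^ 2.

Definition gap_majorant (i d : nat) : R := (/ oddR i + / (2 * INR d + 2)) * gap_tail i d.

Lemma oddR_shift i d : oddR (S i + d) = oddR i + 2 + 2 * INR d.
Proof. unfold oddR. rewrite plus_INR, S_INR. ring. Qed.

Lemma gap_kernel_ge0 p i j : 0 <= gap_kernel p i j.
Proof.
  unfold gap_kernel. destruct lt_dec as [Hij|]; [|lra].
  replace j with (S i + (j - S i))%nat by lia. rewrite oddR_shift.
  assert (0 <= INR (j - S i)) by apply pos_INR. assert (H0 := oddR_pos i).
  apply Rmult_le_pos; [|apply Rlt_le, Rinv_0_lt_compat, pow_lt; lra].
  assert (/ (oddR i + 2 + 2 * INR (j - S i)) ^ p <= / oddR i ^ p)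
    by (apply Rinv_le_contravar; [apply pow_lt|apply pow_incr]; lra).
  lra.
Qed.

(* With [x = 1/o_i] and [y = 1/o_j], [o_j = oddR (S i + d)]: [x^p - y^p <= p (x - y)], and
   [(x - y)/(o_j - o_i)^2 = (1/o_i + 1/(o_j - o_i))/o_j^2]. *)
Lemma gap_kernel_le p i d : gap_kernel p i (S i + d) <= INR p * gap_majorant i d.
Proof.
  unfold gap_kernel, gap_majorant, gap_tail. destruct lt_dec as [_|]; [|lia].
  rewrite oddR_shift.
  set (o := oddR i). set (o' := o + 2 + 2 * INR d).
  assert (Ho : 1 <= o) by apply oddR_ge1. assert (0 <= INR d) by apply pos_INR.
  replace (o' - o) with (2 * INR d + 2) by (unfold o'; ring).
  assert (Hxy : 0 <= / o' <= / o).
  { split; [apply Rlt_le, Rinv_0_lt_compat|apply Rinv_le_contravar]; unfold o'; lra. }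
  assert (Hx1 : / o <= 1) by (rewrite <- Rinv_1; apply Rinv_le_contravar; lra).
  assert (Hlip := pow_sub_le_lipschitz _ _ p Hxy Hx1). rewrite !pow_inv in Hlip.
  replace ((/ o + / (2 * INR d + 2)) * / o' ^ 2) with ((/ o - / o') / (2 * INR d + 2) ^ 2)
    by (unfold o'; field; repeat split; lra).
  unfold Rdiv. rewrite <- Rmult_assoc. apply Rmult_le_compat_r; [|exact Hlip].
  apply Rlt_le, Rinv_0_lt_compat, pow_lt. lra.
Qed.

Lemma gap_tail_pos i d : 0 < gap_tail i d.
Proof.
  unfold gap_tail. assert (H0 := oddR_pos i). assert (0 <= INR d) by apply pos_INR.
  apply Rinv_0_lt_compat, pow_lt. lra.
Qed.

Lemma inv_2INR_2_bounds d : 0 < / (2 * INR d + 2) <= 1.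
Proof.
  assert (0 <= INR d) by apply pos_INR.
  split; [apply Rinv_0_lt_compat|rewrite <- Rinv_1; apply Rinv_le_contravar]; lra.
Qed.

Lemma gap_tail_spec i : ex_series (gap_tail i) /\ Series (gap_tail i) <= / (2 * oddR i).
Proof.
  assert (H0 := oddR_ge1 i).
  destruct (inv_sq_arith_series (oddR i + 2)) as [Hex Hle]; [lra|].
  split; [exact Hex|]. eapply Rle_trans; [exact Hle|].
  apply Rinv_le_contravar; lra.
Qed.

Lemma ex_series_gap_far i : ex_series (fun d => / (2 * INR d + 2) * gap_tail i d).
Proof.
  apply (ex_series_le_nonneg _ (gap_tail i)); [|apply gap_tail_spec].
  intros d. assert (H1 := gap_tail_pos i d). assert (H2 := inv_2INR_2_bounds d).
  split; nra.
Qed.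

(* Summing [1/((2d+2) (2d+3+2i)^2)] over [i] first gives [O(1/d^2)]. *)
Lemma ex_series_gap_far_sums :
  ex_series (fun i => Series (fun d => / (2 * INR d + 2) * gap_tail i d)).
Proof.
  set (b := fun d i => / (2 * INR d + 2) * gap_tail i d).
  assert (Hb : forall d i, b d i = / (2 * INR d + 2) * gap_tail d i)
    by (intros d i; unfold b, gap_tail, oddR; do 3 f_equal; ring).
  assert (Hb0 : forall d i, 0 <= b d i).
  { intros d i. assert (H1 := gap_tail_pos i d). assert (H2 := inv_2INR_2_bounds d).
    unfold b. nra. }
  assert (Hrow : forall d, ex_series (b d) /\ Series (b d) <= / oddR d ^ 2).
  { intros d. assert (H2 := inv_2INR_2_bounds d).
    destruct (gap_tail_spec d) as [Hex Hle].
    rewrite (Series_ext _ _ (Hb d)), Series_scal_l.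
    split; [eapply ex_series_ext; [intros i; symmetry; apply Hb|apply ex_series_scal_l_R, Hex]|].
    eapply Rle_trans; [apply Rmult_le_compat_l; [lra|exact Hle]|].
    assert (0 <= INR d) by apply pos_INR.
    rewrite <- Rinv_mult. unfold oddR. apply Rinv_le_contravar; [apply pow_lt|]; nra. }
  destruct (is_series_swap_nonneg b Hb0 (fun d => proj1 (Hrow d))) as [_ Hswap].
  - apply (ex_series_le_nonneg _ (fun d => / oddR d ^ 2)); [|apply ex_series_inv_oddR_pow; lia].
    intros d. split; [apply Series_ge0, Hb0|apply Hrow].
  - eexists. exact Hswap.
Qed.

Lemma gap_majorant_split i d :
  gap_majorant i d = / oddR i * gap_tail i d + / (2 * INR d + 2) * gap_tail i d.
Proof. unfold gap_majorant. ring. Qed.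

Lemma ex_series_gap_majorant i : ex_series (gap_majorant i).
Proof.
  eapply ex_series_ext; [intros d; symmetry; apply gap_majorant_split|].
  apply ex_series_plus_R; [apply ex_series_scal_l_R, gap_tail_spec|apply ex_series_gap_far].
Qed.

Lemma ex_series_gap_majorant_sums : ex_series (fun i => Series (gap_majorant i)).
Proof.
  assert (Hsplit : forall i, Series (gap_majorant i) =
    / oddR i * Series (gap_tail i) + Series (fun d => / (2 * INR d + 2) * gap_tail i d)).
  { intros i. rewrite (Series_ext _ _ (gap_majorant_split i)), Series_plus, Series_scal_l.
    - reflexivity.
    - apply ex_series_scal_l_R, gap_tail_spec.
    - apply ex_series_gap_far. }
  eapply ex_series_ext; [intros i; symmetry; apply Hsplit|].
  apply ex_series_plus_R; [|apply ex_series_gap_far_sums].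
  apply (ex_series_le_nonneg _ (fun i => / oddR i ^ 2)); [|apply ex_series_inv_oddR_pow; lia].
  intros i. destruct (gap_tail_spec i) as [_ Hle]. assert (H0 := oddR_ge1 i).
  assert (0 <= Series (gap_tail i)) by (apply Series_ge0; intros d; apply Rlt_le, gap_tail_pos).
  assert (0 < / oddR i) by (apply Rinv_0_lt_compat; lra).
  split; [nra|].
  eapply Rle_trans; [apply Rmult_le_compat_l; [lra|exact Hle]|].
  rewrite <- Rinv_mult. apply Rinv_le_contravar; [apply pow_lt|simpl]; nra.
Qed.

Lemma gap_kernel_le_shift p i j : gap_kernel p i j <= INR p * shift_seq (S i) (gap_majorant i) j.
Proof.
  destruct (le_lt_dec j i) as [Hji|Hij].
  - unfold gap_kernel, shift_seq. destruct lt_dec; [lia|]. destruct le_dec; [lia|].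
    rewrite Rmult_0_r. lra.
  - replace j with (S i + (j - S i))%nat by lia.
    rewrite shift_seq_add. apply gap_kernel_le.
Qed.

Lemma gap_kernel_antisym_rows_sum p :
  (forall m, ex_series (fun n => gap_kernel p m n - gap_kernel p n m)) /\
  is_series (fun m => Series (fun n => gap_kernel p m n - gap_kernel p n m)) 0.
Proof.
  assert (Hcmp : forall i j, 0 <= gap_kernel p i j <= INR p * shift_seq (S i) (gap_majorant i) j)
    by (intros i j; split; [apply gap_kernel_ge0|apply gap_kernel_le_shift]).
  assert (Hex : forall i, ex_series (fun j => INR p * shift_seq (S i) (gap_majorant i) j))
    by (intros i; apply ex_series_scal_l_R, ex_series_shift_seq, ex_series_gap_majorant).
  apply is_series_antisymmetrize_nonneg.
  - apply gap_kernel_ge0.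
  - intros i. exact (ex_series_le_nonneg _ _ (Hcmp i) (Hex i)).
  - apply (ex_series_le_nonneg _ (fun i => INR p * Series (gap_majorant i))).
    + intros i. split; [apply Series_ge0, gap_kernel_ge0|].
      rewrite <- (Series_shift_seq (S i) (gap_majorant i)), <- Series_scal_l.
      exact (Series_le _ _ (Hcmp i) (Hex i)).
    + apply ex_series_scal_l_R, ex_series_gap_majorant_sums.
Qed.

(** * Partial fractions *)

Lemma arith_geom_sum (s : R) n :
  sum_n_m (fun j => INR j * s ^ j) 1 n * (1 - s) ^ 2
  = s - INR (S n) * s ^ (S n) + INR n * s ^ (S (S n)).
Proof.
  induction n as [|n IH].
  - rewrite sum_n_m_zero by lia. simpl. change zero with 0. ring.
  - rewrite sum_n_Sm, Rmult_plus_distr_r, IH by lia. rewrite !S_INR. simpl. ring.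
Qed.

Lemma pow_sq_div_pow (u v : R) j : v <> 0 -> (u ^ 2 / v ^ 2) ^ j = u ^ (2 * j) / v ^ (2 * j).
Proof.
  intros Hv. unfold Rdiv. rewrite Rpow_mult_distr, pow_inv, <- !pow_mult. reflexivity.
Qed.

Lemma sq_sub_neq0 (u v : R) : 0 < u -> 0 < v -> u <> v -> u ^ 2 - v ^ 2 <> 0.
Proof. intros Hu Hv Huv E. apply Huv. nra. Qed.

Lemma inv_pow_div_pow_S (x : R) n : 0 < x -> / x ^ n = x / x ^ S n.
Proof. intros Hx. simpl. assert (0 < x ^ n) by (apply pow_lt; auto). field. lra. Qed.

(* The finite sum is [-4/(v u^(2b+2))] times an arithmetico-geometric sum in [s = u^2/v^2],
   which [arith_geom_sum] evaluates in closed form. *)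
Lemma partial_fractions_odd_power (b : nat) (u v : R) : 0 < u -> 0 < v -> u <> v ->
  (/ u ^ (2*b+1) + / v ^ (2*b+1)) / (u + v) ^ 2 + (/ v ^ (2*b+1) - / u ^ (2*b+1)) / (v - u) ^ 2
  = sum_n_m (fun j => -4 * INR j * / v ^ (2*j+1) * / u ^ (2*b+2-2*j)) 1 b
    + 2 * INR (2*b+1) * / v ^ (2*b+1) * / (u ^ 2 - v ^ 2).
Proof.
  intros Hu Hv Huv.
  set (s := u ^ 2 / v ^ 2).
  assert (Hs1 : 1 - s <> 0).
  { unfold s. intro E. apply (sq_sub_neq0 u v Hu Hv Huv).
    replace (u ^ 2) with ((u ^ 2 / v ^ 2) * v ^ 2) by (field; lra).
    replace (u ^ 2 / v ^ 2) with 1 by lra. ring. }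
  rewrite (sum_n_m_ext_loc _ (fun j => (-4 * / (v * u ^ (2*b+2))) * (INR j * s ^ j))).
  2: { intros j Hj. unfold s. rewrite pow_sq_div_pow by lra.
       replace (u ^ (2*b+2)) with (u ^ (2*b+2-2*j) * u ^ (2*j)) by (rewrite <- pow_add; f_equal; lia).
       replace (v ^ (2*j+1)) with (v ^ (2*j) * v) by (rewrite pow_add; ring).
       assert (0 < u ^ (2*b+2-2*j)) by (apply pow_lt; auto).
       assert (0 < u ^ (2*j)) by (apply pow_lt; auto).
       assert (0 < v ^ (2*j)) by (apply pow_lt; auto).
       as_R_eq. field. repeat split; lra. }
  rewrite (sum_n_m_mult_l (-4 * / (v * u ^ (2*b+2)))). change mult with Rmult.
  change (@sum_n_m (Ring.AbelianMonoid R_Ring)) with (@sum_n_m R_AbelianMonoid).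
  replace (sum_n_m (fun j => INR j * s ^ j) 1 b)
    with ((s - INR (S b) * s ^ (S b) + INR b * s ^ (S (S b))) / (1 - s) ^ 2)
    by (rewrite <- arith_geom_sum; field; exact Hs1).
  replace (s ^ (S (S b))) with (s * s ^ (S b)) by reflexivity.
  replace (s ^ (S b)) with (u ^ (2*b+2) / v ^ (2*b+2))
    by (unfold s; rewrite pow_sq_div_pow by lra; f_equal; f_equal; lia).
  replace (2*b+2)%nat with (S (2*b+1)) by lia.
  rewrite (inv_pow_div_pow_S u), (inv_pow_div_pow_S v) by assumption.
  assert (0 < u ^ S (2*b+1)) by (apply pow_lt; auto).
  assert (0 < v ^ S (2*b+1)) by (apply pow_lt; auto).
  replace (INR (2*b+1)) with (2 * INR b + 1) by (rewrite plus_INR, mult_INR; simpl; ring).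
  rewrite S_INR. unfold s in *.
  assert (v - u <> 0) by lra. assert (Huv2 := sq_sub_neq0 u v Hu Hv Huv).
  field. repeat split; lra.
Qed.

Lemma sum_n_rev N (f : nat -> R) : sum_n f N = sum_n (fun i => f (N - i)%nat) N.
Proof.
  revert f. induction N as [|N IH]; intros f; [rewrite !sum_O; reflexivity|].
  rewrite (sum_n_Sn_R (fun i => f (S N - i)%nat)). cbv beta. rewrite Nat.sub_diag.
  unfold sum_n at 1. rewrite sum_Sn_m, <- sum_n_m_S by lia. fold (sum_n (fun n => f (S n)) N).
  rewrite IH, Rplus_comm. f_equal.
  apply sum_n_ext_loc. intros k Hk. f_equal. lia.
Qed.

Definition inv_dist (m n : nat) : R := if Nat.eq_dec n m then 0 else / (INR n - INR m).

Lemma sum_n_inv_dist_sym m : sum_n (inv_dist m) (2 * m) = 0.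
Proof.
  assert (Hanti : forall i, (i <= 2 * m)%nat -> inv_dist m (2 * m - i) = -1 * inv_dist m i).
  { intros i Hi. unfold inv_dist.
    destruct (Nat.eq_dec (2 * m - i) m), (Nat.eq_dec i m); try lia; [ring|].
    rewrite minus_INR, mult_INR by lia. simpl (INR 2).
    replace ((1 + 1) * INR m - INR i - INR m) with (- (INR i - INR m)) by ring.
    rewrite Rinv_opp. ring. }
  assert (H := sum_n_rev (2 * m) (inv_dist m)).
  rewrite (sum_n_ext_loc (fun i => inv_dist m (2 * m - i)%nat) (fun i => -1 * inv_dist m i)) in H
    by (intros; apply Hanti; lia).
  rewrite (sum_n_mult_l (-1)) in H. change mult with Rmult in H.
  change (@sum_n (Ring.AbelianMonoid R_Ring)) with (@sum_n R_AbelianMonoid) in H. lra.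
Qed.

Lemma is_lim_seq_inv_dist m : is_lim_seq (inv_dist m) 0.
Proof.
  apply (is_lim_seq_incr_n _ (S m)).
  apply is_lim_seq_ext with (fun n => / (1 + 1 * INR n)); [|apply is_lim_seq_inv_affine; lra].
  intros n. unfold inv_dist. destruct Nat.eq_dec; [lia|].
  rewrite plus_INR, S_INR. f_equal. ring.
Qed.

Definition inv_oddR_sq_sub (m n : nat) : R :=
  if Nat.eq_dec n m then 0 else / (oddR n ^ 2 - oddR m ^ 2).

(* [o_n^2 - o_m^2 = 4 (n - m) (n + m + 1)]: the series telescopes with gap [2m + 1] and the
   leftover [sum_{i <= 2m} 1/(i - m)] vanishes by symmetry. *)
Lemma is_series_inv_oddR_sq_sub m : is_series (inv_oddR_sq_sub m) (/ (4 * oddR m ^ 2)).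
Proof.
  assert (Ho := oddR_pos m).
  assert (Hdecomp : forall n, inv_oddR_sq_sub m n =
     / (4 * oddR m) * (inv_dist m n - inv_dist m (n + S (2 * m))%nat)
     + point_seq m (/ (4 * oddR m ^ 2)) n).
  { intros n. unfold inv_oddR_sq_sub, inv_dist, point_seq.
    destruct (Nat.eq_dec (n + S (2 * m)) m) as [|_]; [lia|].
    rewrite plus_INR, S_INR, mult_INR. simpl (INR 2).
    destruct (Nat.eq_dec n m) as [->|Hnm].
    - replace (INR m + ((1 + 1) * INR m + 1) - INR m) with (oddR m) by (unfold oddR; ring).
      field. lra.
    - assert (INR n <> INR m) by (apply not_INR; auto).
      assert (0 <= INR n) by apply pos_INR. assert (0 <= INR m) by apply pos_INR.
      replace (oddR n ^ 2 - oddR m ^ 2)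
        with (4 * (INR n - INR m) * (INR n + ((1 + 1) * INR m + 1) - INR m)) by (unfold oddR; ring).
      unfold oddR in *. field. repeat split; lra. }
  assert (Htel := is_series_scal_l (/ (4 * oddR m)) _ _
                   (is_series_telescope_gap _ (2 * m) (is_lim_seq_inv_dist m))).
  assert (Hsum := is_series_plus _ _ _ _ Htel (is_series_point_seq m (/ (4 * oddR m ^ 2)))).
  rewrite sum_n_inv_dist_sym in Hsum.
  refine (is_series_ext_eq _ _ _ _ _ _ Hsum).
  - intros n. symmetry. apply Hdecomp.
  - change (/ (4 * oddR m) * 0 + / (4 * oddR m ^ 2) = / (4 * oddR m ^ 2)). ring.
Qed.

Definition punctured_pow (s m n : nat) : R := if Nat.eq_dec n m then 0 else / oddR n ^ s.

Lemma is_series_punctured_pow s m : (2 <= s)%nat ->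
  is_series (punctured_pow s m) (lambda_odd s - / oddR m ^ s).
Proof.
  intros Hs. rewrite lambda_odd_Series.
  refine (is_series_ext_eq _ _ _ _ _ _
            (is_series_minus _ _ _ _ (Series_correct _ (ex_series_inv_oddR_pow s Hs))
                                     (is_series_point_seq m (/ oddR m ^ s)))).
  - intros n. change (/ oddR n ^ s - point_seq m (/ oddR m ^ s) n = punctured_pow s m n).
    unfold punctured_pow, point_seq. destruct Nat.eq_dec as [->|]; ring.
  - reflexivity.
Qed.

Definition row_term (b m n : nat) : R :=
  point_seq m (/ oddR m ^ (2*b+3) / 2) n
  + sum_n_m (fun j => -4 * INR j * / oddR m ^ (2*j+1) * punctured_pow (2*b+2-2*j) m n) 1 b
  + 2 * INR (2*b+1) * / oddR m ^ (2*b+1) * inv_oddR_sq_sub m n.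

Lemma kernels_row_term b m n :
  sym_kernel (2*b+1) m n + (gap_kernel (2*b+1) m n - gap_kernel (2*b+1) n m) = row_term b m n.
Proof.
  unfold row_term, sym_kernel, gap_kernel, punctured_pow, inv_oddR_sq_sub, point_seq.
  assert (Hm := oddR_pos m).
  destruct (Nat.eq_dec n m) as [->|Hnm].
  - destruct (lt_dec m m); [lia|].
    rewrite (sum_n_m_ext _ (fun _ => 0)) by (intros j; rewrite Rmult_0_r; reflexivity).
    rewrite sum_n_m_const, Rmult_0_r.
    replace (oddR m ^ (2*b+3)) with (oddR m ^ (2*b+1) * oddR m ^ 2)
      by (rewrite <- pow_add; f_equal; lia).
    assert (0 < oddR m ^ (2*b+1)) by (apply pow_lt; lra).
    field. lra.
  - assert (Hn := oddR_pos n).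
    assert (Hneq : oddR n <> oddR m) by (unfold oddR; intros E; apply Hnm, INR_eq; lra).
    rewrite Rplus_0_l, <- (partial_fractions_odd_power b (oddR n) (oddR m) Hn Hm Hneq).
    assert (oddR m - oddR n <> 0) by lra.
    assert (oddR n ^ (2*b+1) <> 0) by (apply pow_nonzero; lra).
    assert (oddR m ^ (2*b+1) <> 0) by (apply pow_nonzero; lra).
    destruct (lt_dec m n), (lt_dec n m); try lia; field; repeat split; lra.
Qed.

Lemma sum_n_m_INR b : sum_n_m (fun j => INR j) 1 b = INR b * (INR b + 1) / 2.
Proof.
  induction b as [|b IH].
  - rewrite sum_n_m_zero by lia. simpl. change zero with 0. field.
  - rewrite sum_n_Sm, IH, S_INR by lia. change plus with Rplus. as_R_eq. field.
Qed.

Definition row_sum (b m : nat) : R :=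
  INR (S b) * (2 * INR (S b) - 1) * / oddR m ^ (2*b+3)
  - 4 * sum_n_m (fun j => INR j * lambda_odd (2*b+2-2*j) * / oddR m ^ (2*j+1)) 1 b.

Lemma row_sum_expand b m :
  / oddR m ^ (2*b+3) / 2
  + sum_n_m (fun j => -4 * INR j * / oddR m ^ (2*j+1)
                      * (lambda_odd (2*b+2-2*j) - / oddR m ^ (2*b+2-2*j))) 1 b
  + 2 * INR (2*b+1) * / oddR m ^ (2*b+1) * / (4 * oddR m ^ 2) = row_sum b m.
Proof.
  assert (Hm := oddR_pos m).
  rewrite (sum_n_m_ext_loc _ (fun j => -4 * (INR j * lambda_odd (2*b+2-2*j) * / oddR m ^ (2*j+1))
                                      + 4 * / oddR m ^ (2*b+3) * INR j)).
  2: { intros j Hj.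
       replace (oddR m ^ (2*b+3)) with (oddR m ^ (2*j+1) * oddR m ^ (2*b+2-2*j))
         by (rewrite <- pow_add; f_equal; lia).
       assert (0 < oddR m ^ (2*j+1)) by (apply pow_lt, oddR_pos).
       assert (0 < oddR m ^ (2*b+2-2*j)) by (apply pow_lt, oddR_pos).
       as_R_eq. field. split; lra. }
  rewrite (sum_n_m_plus (fun j => -4 * (INR j * lambda_odd (2*b+2-2*j) * / oddR m ^ (2*j+1)))
                        (fun j => 4 * / oddR m ^ (2*b+3) * INR j)).
  rewrite (sum_n_m_mult_l (-4)), (sum_n_m_mult_l (4 * / oddR m ^ (2*b+3))).
  change (@sum_n_m (Ring.AbelianMonoid R_Ring)) with (@sum_n_m R_AbelianMonoid).
  change plus with Rplus. change mult with Rmult.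
  rewrite sum_n_m_INR.
  unfold row_sum. rewrite !S_INR.
  replace (INR (2*b+1)) with (2 * INR b + 1) by (rewrite plus_INR, mult_INR; simpl; ring).
  replace (oddR m ^ (2*b+3)) with (oddR m ^ (2*b+1) * oddR m ^ 2) by (rewrite <- pow_add; f_equal; lia).
  assert (0 < oddR m ^ (2*b+1)) by (apply pow_lt, oddR_pos).
  field. split; lra.
Qed.

Lemma is_series_row_term b m : is_series (row_term b m) (row_sum b m).
Proof.
  set (c := fun j => -4 * INR j * / oddR m ^ (2*j+1)).
  assert (Hpunct : forall j, (1 <= j <= b)%nat ->
            is_series (punctured_pow (2*b+2-2*j) m) (lambda_odd (2*b+2-2*j) - / oddR m ^ (2*b+2-2*j)))
    by (intros j Hj; apply is_series_punctured_pow; lia).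
  assert (Hfin := is_series_sum_n_m (fun j n => c j * punctured_pow (2*b+2-2*j) m n) 1 b
            (fun j Hj => ex_series_scal_l_R _ _ (ex_intro _ _ (Hpunct j Hj)))).
  assert (Hinv := is_series_scal_l (2 * INR (2*b+1) * / oddR m ^ (2*b+1)) _ _
                    (is_series_inv_oddR_sq_sub m)).
  assert (Hall := is_series_plus _ _ _ _
                    (is_series_plus _ _ _ _ (is_series_point_seq m (/ oddR m ^ (2*b+3) / 2)) Hfin)
                    Hinv).
  refine (is_series_ext_eq _ _ _ _ _ _ Hall); [intros n; reflexivity|].
  rewrite <- row_sum_expand.
  change (/ oddR m ^ (2*b+3) / 2
          + sum_n_m (fun j => Series (fun n => c j * punctured_pow (2*b+2-2*j) m n)) 1 b
          + 2 * INR (2*b+1) * / oddR m ^ (2*b+1) * / (4 * oddR m ^ 2)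
          = / oddR m ^ (2*b+3) / 2
            + sum_n_m (fun j => c j * (lambda_odd (2*b+2-2*j) - / oddR m ^ (2*b+2-2*j))) 1 b
            + 2 * INR (2*b+1) * / oddR m ^ (2*b+1) * / (4 * oddR m ^ 2)).
  do 2 f_equal. apply sum_n_m_ext_loc. intros j Hj.
  rewrite Series_scal_l, (is_series_unique _ _ (Hpunct j Hj)). reflexivity.
Qed.

Lemma is_series_row_sum b :
  is_series (row_sum b)
    (INR (S b) * (2 * INR (S b) - 1) * lambda_odd (2*b+3)
     - 4 * sum_n_m (fun j => INR j * lambda_odd (2*b+2-2*j) * lambda_odd (2*j+1)) 1 b).
Proof.
  set (g := fun j m => INR j * lambda_odd (2*b+2-2*j) * / oddR m ^ (2*j+1)).
  assert (Hfin := is_series_sum_n_m g 1 b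
            (fun j Hj => ex_series_scal_l_R _ _ (ex_series_inv_oddR_pow (2*j+1) ltac:(lia)))).
  assert (Hlead := is_series_scal_l (INR (S b) * (2 * INR (S b) - 1)) _ _
                     (Series_correct _ (ex_series_inv_oddR_pow (2*b+3) ltac:(lia)))).
  refine (is_series_ext_eq _ _ _ _ _ _
            (is_series_minus _ _ _ _ Hlead (is_series_scal_l 4 _ _ Hfin))).
  - intros m. reflexivity.
  - change (INR (S b) * (2 * INR (S b) - 1) * Series (fun n => / oddR n ^ (2*b+3))
            - 4 * sum_n_m (fun j => Series (g j)) 1 b
            = INR (S b) * (2 * INR (S b) - 1) * lambda_odd (2*b+3)
              - 4 * sum_n_m (fun j => INR j * lambda_odd (2*b+2-2*j) * lambda_odd (2*j+1)) 1 b).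
    rewrite <- lambda_odd_Series. do 2 f_equal.
    apply sum_n_m_ext. intros j. unfold g. rewrite Series_scal_l, (lambda_odd_Series (2*j+1)). reflexivity.
Qed.

Lemma sigma_odd_2_odd b : sigma_odd 2 (2*b+1) =
  2 * INR (S b) * (2 * INR (S b) - 1) * lambda_odd (2*b+3)
  - 8 * sum_n_m (fun j => INR j * lambda_odd (2*b+2-2*j) * lambda_odd (2*j+1)) 1 b.
Proof.
  destruct (sym_kernel_rows_sum (2*b+1)) as [Hsym_rows Hsym]; [lia|].
  destruct (gap_kernel_antisym_rows_sum (2*b+1)) as [Hgap_rows Hgap].
  assert (Hrows := is_series_plus _ _ _ _ Hsym Hgap).
  assert (Hrows' : is_series (row_sum b) (2 * Series (fun n => / oddR n ^ (2*b+1) * cross_sum n))).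
  { refine (is_series_ext_eq _ _ _ _ _ _ Hrows).
    - intros m. change (Series (sym_kernel (2*b+1) m)
                        + Series (fun n => gap_kernel (2*b+1) m n - gap_kernel (2*b+1) n m)
                        = row_sum b m).
      rewrite <- Series_plus by auto.
      rewrite (Series_ext _ _ (kernels_row_term b m)).
      apply is_series_unique, is_series_row_term.
    - change (2 * Series (fun n => / oddR n ^ (2*b+1) * cross_sum n) + 0
              = 2 * Series (fun n => / oddR n ^ (2*b+1) * cross_sum n)). ring. }
  rewrite sigma_odd_cross_sum by lia.
  apply is_series_unique in Hrows'.
  rewrite (is_series_unique _ _ (is_series_row_sum b)) in Hrows'.
  lra.
Qed.

Theorem mainTheorem6 (a : nat) (ha : (1 <= a)%nat) :
  sigma_odd 2 (2 * a - 1)%nat =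
  2 * INR a * (2 * INR a - 1) * lambda_odd (2 * a + 1)%nat
  - 8 * sum_n_m (fun j => INR j * lambda_odd (2 * a - 2 * j)%nat * lambda_odd (2 * j + 1)%nat)
          1 (a - 1)%nat.
Proof.
  destruct a as [|b]; [lia|].
  replace (2 * S b - 1)%nat with (2 * b + 1)%nat by lia.
  replace (2 * S b + 1)%nat with (2 * b + 3)%nat by lia.
  replace (S b - 1)%nat with b by lia.
  rewrite sigma_odd_2_odd.
  do 2 f_equal. apply sum_n_m_ext. intros j. do 3 f_equal. lia.
Qed.
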